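(* Let $\mathcal B$ be a Bayesian network all of whose random variables are Boolean, and let $\Pi_{\mathcal B}$ be its $\mathrm{LP}^{\mathrm{MLN}}$ translation. Then for every truth assignment $I$ to the random variables of $\mathcal B$ (identified with the set of variables assigned true), the probability of $I$ under $\mathcal B$ equals $\sum_{J} P_{\Pi_{\mathcal B}}(J)$, where $J$ ranges over the interpretations of $\Pi_{\mathcal B}$ whose restriction to the variable atoms is $I$.
   Context: $\mathrm{LP}^{\mathrm{MLN}}$: a program is a finite set of weighted rules $w:R$ with $w$ real or the symbol $\alpha$ (infinite weight). For ground $\Pi$ and interpretation $I$: $\overline{\Pi}$ drops weights, $\Pi_I$ is the set of rules satisfied by $I$, $\mathrm{SM}[\Pi]=\{I: I\text{ stable model of }\overline{\Pi_I}\}$, $W_\Pi(I)=\exp(\sum_{w:R\in\Pi_I}w)$ if $I\in\mathrm{SM}[\Pi]$ and $0$ otherwise, and $P_\Pi(I)=\lim_{\alpha\to\infty}W_\Pi(I)/\sum_{J\in\mathrm{SM}[\Pi]}W_\Pi(J)$. Translation $\Pi_{\mathcal B}$: each random variable $V$ is an atom. For each node $V$ with parents $V_1,\dots,V_n$ ($n\ge0$) and each conditional probability table entry $P(V=\mathbf t\mid V_1=S_1,\dots,V_n=S_n)=p$, $S_j\in\{\mathbf t,\mathbf f\}$, introduce an atom $PF(V,S_1,\dots,S_n)$ and include: the weighted fact $\ln(p/(1-p)): PF(V,S_1,\dots,S_n)$ if $0<p<1$; the hard fact $\alpha: PF(V,S_1,\dots,S_n)$ if $p=1$; the hard constraint $\alpha:\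 \leftarrow \mathtt{not}\ PF(V,S_1,\dots,S_n)$ if $p=0$. Also include for each such entry the hard rule $\alpha: V\leftarrow V_1^{S_1},\dots,V_n^{S_n}, PF(V,S_1,\dots,S_n)$, where $V_j^{S_j}$ is $V_j$ if $S_j=\mathbf t$ and $\mathtt{not}\ V_j$ if $S_j=\mathbf f$. *)

From Stdlib Require Import Reals List Bool Arith.
Import ListNotations.
Open Scope R_scope.

(* Atoms of the translation: variable atoms V and PF(V,S_1,...,S_n). *)
Inductive atom : Type :=
| AVar : nat -> atom
| APF  : nat -> list bool -> atom.

Definition atom_eq_dec : forall a b : atom, {a = b} + {a <> b}.
Proof. decide equality; first [apply list_eq_dec; apply bool_dec | apply Nat.eq_dec]. Defined.

Definition atom_eqb (a b : atom) : bool := if atom_eq_dec a b then true else false.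

Definition interp := atom -> bool.

Inductive weight : Type := WReal (w : R) | WAlpha.

(* Normal rule  head <- pos, not neg  ; head = None is a constraint. *)
Record rule : Type := mkRule { rhead : option atom; rpos : list atom; rneg : list atom }.

Definition program := list (weight * rule).

Definition body_holds (J : interp) (r : rule) : bool :=
  forallb (fun a => J a) (rpos r) && forallb (fun a => negb (J a)) (rneg r).

Definition head_holds (J : interp) (r : rule) : bool :=
  match rhead r with Some h => J h | None => false end.

Definition satb (J : interp) (r : rule) : bool := implb (body_holds J r) (head_holds J r).

(* J |= r^I  (Gelfond-Lifschitz reduct of r w.r.t. I) *)
Definition reduct_satb (I J : interp) (r : rule) : bool :=
  if existsb (fun a => I a) (rneg r) then true   (* rule deleted from reduct *)
  else implb (forallb (fun a => J a) (rpos r)) (head_holds J r).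

(* All interpretations over a signature (list of atoms): false outside it. *)
Definition upd (f : interp) (a : atom) (b : bool) : interp :=
  fun x => if atom_eqb x a then b else f x.

Fixpoint interps (sg : list atom) : list interp :=
  match sg with
  | [] => [fun _ => false]
  | a :: l => flat_map (fun f => [upd f a false; upd f a true]) (interps l)
  end.

Definition subb (sg : list atom) (J I : interp) : bool := forallb (fun a => implb (J a) (I a)) sg.
Definition eqb_on (sg : list atom) (J I : interp) : bool := forallb (fun a => Bool.eqb (J a) (I a)) sg.

Definition stableb (sg : list atom) (P : list rule) (I : interp) : bool :=
  forallb (satb I) P &&
  forallb (fun J => implb (subb sg J I && forallb (reduct_satb I J) P) (eqb_on sg J I))
          (interps sg).

Definition sat_part (Pi : program) (I : interp) : program :=
  filter (fun wr => satb I (snd wr)) Pi.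

Definition unweight (Pi : program) : list rule := map snd Pi.

Definition wval (alpha : R) (w : weight) : R :=
  match w with WReal x => x | WAlpha => alpha end.

Definition sumR {A} (f : A -> R) (l : list A) : R := fold_right Rplus 0 (map f l).
Definition prodR {A} (f : A -> R) (l : list A) : R := fold_right Rmult 1 (map f l).

(* W_Pi(I), with alpha given a concrete real value *)
Definition Wt (sg : list atom) (Pi : program) (alpha : R) (I : interp) : R :=
  if stableb sg (unweight (sat_part Pi I)) I
  then exp (sumR (fun wr => wval alpha (fst wr)) (sat_part Pi I))
  else 0.

(* P_Pi(I) = p, i.e. lim_{alpha -> oo} W(I) / sum_J W(J) = p,
   J ranging over the interpretations of the signature. *)
Definition lpmln_prob (sg : list atom) (Pi : program) (I : interp) (p : R) : Prop :=
  forall eps, eps > 0 -> exists M : R, forall alpha, alpha > M ->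
    Rabs (Wt sg Pi alpha I / sumR (Wt sg Pi alpha) (interps sg) - p) < eps.

(* Nodes are 0..bn_n-1.  bn_par v = list of parents of v (in a fixed order);
   bn_cpt v s = P(v = t | parents = s) for s : list bool of length |bn_par v|. *)
Record BN : Type := mkBN { bn_n : nat; bn_par : nat -> list nat; bn_cpt : nat -> list bool -> R }.

(* Well-formedness: nodes numbered in a topological order of the DAG
   (every parent has smaller index), parent lists duplicate-free,
   CPT entries are probabilities. *)
Definition bn_wf (B : BN) : Prop :=
  forall v, (v < bn_n B)%nat ->
    NoDup (bn_par B v) /\
    (forall u, In u (bn_par B v) -> (u < v)%nat) /\
    (forall s, length s = length (bn_par B v) -> 0 <= bn_cpt B v s <= 1).

Fixpoint all_assign (k : nat) : list (list bool) :=
  match k with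
  | O => [[]]
  | S k' => flat_map (fun s => [true :: s; false :: s]) (all_assign k')
  end.

Definition bn_prob (B : BN) (I : nat -> bool) : R :=
  prodR (fun v => let p := bn_cpt B v (map I (bn_par B v)) in
                  if I v then p else 1 - p)
        (seq 0 (bn_n B)).

(* Hard rule  alpha : V <- V_1^{S_1},...,V_n^{S_n}, PF(V,S_1..S_n) *)
Definition bn_rule (B : BN) (v : nat) (s : list bool) : rule :=
  mkRule (Some (AVar v))
         (map (fun us => AVar (fst us)) (filter (fun us => snd us) (combine (bn_par B v) s))
            ++ [APF v s])
         (map (fun us => AVar (fst us)) (filter (fun us => negb (snd us)) (combine (bn_par B v) s))).

Definition pf_rules (v : nat) (s : list bool) (p : R) : program :=
  if Rlt_dec 0 p then
    if Rlt_dec p 1 then [(WReal (ln (p / (1 - p))), mkRule (Some (APF v s)) [] [])]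
    else [(WAlpha, mkRule (Some (APF v s)) [] [])]           (* p = 1 *)
  else [(WAlpha, mkRule None [APF v s] [])].                 (* p = 0 :  alpha : <- PF *)

Definition translate (B : BN) : program :=
  flat_map (fun v =>
     flat_map (fun s => pf_rules v s (bn_cpt B v s) ++ [(WAlpha, bn_rule B v s)])
              (all_assign (length (bn_par B v))))
     (seq 0 (bn_n B)).

Definition bn_sig (B : BN) : list atom :=
  flat_map (fun v => AVar v :: map (APF v) (all_assign (length (bn_par B v))))
           (seq 0 (bn_n B)).

Definition restricts_to (B : BN) (J : interp) (I : nat -> bool) : bool :=
  forallb (fun v => Bool.eqb (J (AVar v)) (I v)) (seq 0 (bn_n B)).

(* As alpha grows, W(J) = exp (alpha * #hard) * A(J) * exp (- alpha * #violated hard rules(J)),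
   where A(J) is the exponential of the satisfied soft weights on stable models; so P(J) is
   A(J) normalised over the stable models satisfying every hard rule.  For the translation of a
   Bayesian network these are exactly the J in which each variable equals the PF atom selected
   by its parents' values and the PF atoms of entries 0 and 1 are false resp. true (stability
   by support and tightness, the network being acyclic).  On them A(J) = C * Q(J) with C a
   constant and Q the distribution in which each PF(V,S) is an independent coin of bias
   P(V=t | S).  Q sums to 1 (eliminate the nodes in reverse topological order), hence P = Q.
   Summing Q over the PF atoms with the variables fixed to I leaves, for each V, the coin
   selected by I's parent values: the chain-rule factor of P_B(I). *)

From Coquelicot Require Import Coquelicot.
From Stdlib Require Import Reals List Lra Lia Permutation FunctionalExtensionality Bool Wf_nat.
Import ListNotations.
Open Scope R_scope.

Section ListSums.

Context {A : Type}.
Implicit Types (f g : A -> R) (l : list A).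

Lemma sumR_cons f x l : sumR f (x :: l) = f x + sumR f l.
Proof. reflexivity. Qed.

Lemma prodR_cons f x l : prodR f (x :: l) = f x * prodR f l.
Proof. reflexivity. Qed.

Lemma sumR_app f l1 l2 : sumR f (l1 ++ l2) = sumR f l1 + sumR f l2.
Proof. unfold sumR; induction l1 as [|x l1 IH]; cbn; [ring|]. rewrite IH; ring. Qed.

Lemma prodR_app f l1 l2 : prodR f (l1 ++ l2) = prodR f l1 * prodR f l2.
Proof. unfold prodR; induction l1 as [|x l1 IH]; cbn; [ring|]. rewrite IH; ring. Qed.

Lemma sumR_ext_in f g l : (forall x, In x l -> f x = g x) -> sumR f l = sumR g l.
Proof.
  induction l as [|x l IH]; intros H; [reflexivity|].
  rewrite !sumR_cons, H by now left.
  rewrite IH; [reflexivity|]. intros y Hy. apply H. now right.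
Qed.

Lemma prodR_ext_in f g l : (forall x, In x l -> f x = g x) -> prodR f l = prodR g l.
Proof.
  induction l as [|x l IH]; intros H; [reflexivity|].
  rewrite !prodR_cons, H by now left.
  rewrite IH; [reflexivity|]. intros y Hy. apply H. now right.
Qed.

Lemma sumR_plus f g l : sumR (fun x => f x + g x) l = sumR f l + sumR g l.
Proof. unfold sumR; induction l as [|x l IH]; cbn; [ring|]. rewrite IH; ring. Qed.

Lemma sumR_scal c f l : sumR (fun x => c * f x) l = c * sumR f l.
Proof. unfold sumR; induction l as [|x l IH]; cbn; [ring|]. rewrite IH; ring. Qed.

Lemma prodR_mult f g l : prodR (fun x => f x * g x) l = prodR f l * prodR g l.
Proof. unfold prodR; induction l as [|x l IH]; cbn; [ring|]. rewrite IH; ring. Qed.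

Lemma prodR_const1 l : prodR (fun _ => 1) l = 1.
Proof. unfold prodR; induction l as [|x l IH]; cbn; [ring|]. rewrite IH; ring. Qed.

Lemma sumR_filter f (P : A -> bool) l :
  sumR f (filter P l) = sumR (fun x => if P x then f x else 0) l.
Proof.
  unfold sumR; induction l as [|x l IH]; cbn; [ring|].
  destruct (P x); cbn; rewrite IH; ring.
Qed.

Lemma exp_sumR f l : exp (sumR f l) = prodR (fun x => exp (f x)) l.
Proof.
  unfold sumR, prodR; induction l as [|x l IH]; cbn; [apply exp_0|].
  rewrite exp_plus, IH; reflexivity.
Qed.

Lemma sumR_ge0 f l : (forall x, In x l -> 0 <= f x) -> 0 <= sumR f l.
Proof.
  induction l as [|x l IH]; intros H; [cbn; lra|rewrite sumR_cons].
  pose proof (H x (or_introl eq_refl)). pose proof (IH (fun y h => H y (or_intror h))). lra.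
Qed.

Lemma sumR_eq0_iff f l : (forall x, In x l -> 0 <= f x) ->
  sumR f l = 0 <-> forall x, In x l -> f x = 0.
Proof.
  induction l as [|x l IH]; intros H; [cbn; split; [intros _ y []|reflexivity]|rewrite sumR_cons].
  pose proof (H x (or_introl eq_refl)) as Hx.
  pose proof (sumR_ge0 f l (fun y h => H y (or_intror h))) as Hl.
  specialize (IH (fun y h => H y (or_intror h))).
  split.
  - intros E y [<-|Hy]; [lra|]. apply IH; [lra|assumption].
  - intros Z. rewrite (Z x (or_introl eq_refl)), (proj2 IH); [ring|].
    intros y Hy. apply Z. now right.
Qed.

Lemma prodR_eq0 f l x : In x l -> f x = 0 -> prodR f l = 0.
Proof.
  induction l as [|y l IH]; intros Hin Hf; [destruct Hin|rewrite prodR_cons].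
  destruct Hin as [<-|Hin]; [rewrite Hf|rewrite (IH Hin Hf)]; ring.
Qed.

Lemma prodR_pos f l : (forall x, In x l -> 0 < f x) -> 0 < prodR f l.
Proof.
  induction l as [|x l IH]; intros H; [cbn; lra|rewrite prodR_cons].
  apply Rmult_lt_0_compat; [apply H; now left|]. apply IH. intros y Hy. apply H. now right.
Qed.

Lemma prodR_single f l x0 :
  NoDup l -> In x0 l -> (forall x, In x l -> x <> x0 -> f x = 1) -> prodR f l = f x0.
Proof.
  induction l as [|y l IH]; intros ND Hin H; [destruct Hin|].
  inversion ND as [|? ? Hy ND']; subst. rewrite prodR_cons. destruct Hin as [<-|Hin].
  - rewrite (prodR_ext_in f (fun _ => 1)), prodR_const1; [ring|].
    intros x Hx. apply H; [now right|]. intros ->. contradiction.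
  - rewrite IH, (H y); auto; [ring|now left|..].
    + intros ->. contradiction.
    + intros x Hx. apply H. now right.
Qed.

End ListSums.

Lemma sumR_flat_map {A B} (f : B -> R) (g : A -> list B) l :
  sumR f (flat_map g l) = sumR (fun x => sumR f (g x)) l.
Proof.
  induction l as [|x l IH]; [reflexivity|].
  cbn [flat_map]. rewrite sumR_app, sumR_cons, IH. reflexivity.
Qed.

Lemma prodR_flat_map {A B} (f : B -> R) (g : A -> list B) l :
  prodR f (flat_map g l) = prodR (fun x => prodR f (g x)) l.
Proof.
  induction l as [|x l IH]; [reflexivity|].
  cbn [flat_map]. rewrite prodR_app, prodR_cons, IH. reflexivity.
Qed.

Lemma prodR_map {A B} (f : B -> R) (g : A -> B) l : prodR f (map g l) = prodR (fun x => f (g x)) l.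
Proof.
  induction l as [|x l IH]; [reflexivity|].
  cbn [map]. rewrite !prodR_cons, IH. reflexivity.
Qed.

Definition b2R (b : bool) : R := if b then 1 else 0.

Definition zero_ind (x : R) : R := if Req_EM_T x 0 then 1 else 0.

Lemma is_lim_exp_neg_mul (d : R) : 0 <= d -> is_lim (fun a => exp (- (a * d))) p_infty (zero_ind d).
Proof.
  intros Hd. unfold zero_ind. destruct (Req_EM_T d 0) as [->|Hd0].
  - eapply is_lim_ext; [|apply is_lim_const]. intros a. cbn.
    rewrite Rmult_0_r, Ropp_0, exp_0. reflexivity.
  - eapply (is_lim_comp exp (fun a => - (a * d)) p_infty 0 m_infty); [apply is_lim_exp_m| |].
    + apply is_lim_spec. intros M. exists (Rabs M / d). intros a Ha.
      apply (Rmult_lt_compat_r d) in Ha; [|lra].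
      unfold Rdiv in Ha. rewrite Rmult_assoc, Rinv_l, Rmult_1_r in Ha by lra.
      pose proof (Rle_abs (- M)) as HM. rewrite Rabs_Ropp in HM. cbn. lra.
    + exists 0. discriminate.
Qed.

Lemma is_lim_sumR {X} (L : list X) (f : R -> X -> R) (l : X -> R) :
  (forall x, In x L -> is_lim (fun a => f a x) p_infty (l x)) ->
  is_lim (fun a => sumR (f a) L) p_infty (sumR l L).
Proof.
  induction L as [|x L IH]; intros H; [exact (is_lim_const 0 p_infty)|].
  change (is_lim (fun a => f a x + sumR (f a) L) p_infty (l x + sumR l L)).
  apply (is_lim_plus _ _ _ (l x) (sumR l L)); [apply H; now left| |constructor].
  apply IH. intros y Hy. apply H. now right.
Qed.

Lemma is_lim_normalized {X} (L : list X) (A D : X -> R) (y : X) :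
  (forall x, In x L -> 0 <= D x) -> 0 <= D y ->
  sumR (fun x => A x * zero_ind (D x)) L <> 0 ->
  is_lim (fun a => A y * exp (- (a * D y)) / sumR (fun x => A x * exp (- (a * D x))) L)
    p_infty (A y * zero_ind (D y) / sumR (fun x => A x * zero_ind (D x)) L).
Proof.
  intros HD HDy HS.
  apply (is_lim_div _ _ p_infty (A y * zero_ind (D y)) (sumR (fun x => A x * zero_ind (D x)) L)).
  - apply (is_lim_scal_l _ (A y) p_infty (zero_ind (D y))), is_lim_exp_neg_mul, HDy.
  - apply (is_lim_sumR L (fun a x => A x * exp (- (a * D x)))). intros x Hx.
    apply (is_lim_scal_l _ (A x) p_infty (zero_ind (D x))), is_lim_exp_neg_mul, HD, Hx.
  - intros E. apply HS. now injection E.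
  - exact I.
Qed.

Definition is_hard (w : weight) : R := match w with WAlpha => 1 | WReal _ => 0 end.
Definition soft_val (w : weight) : R := match w with WReal x => x | WAlpha => 0 end.

Definition hard_count (Pi : program) : R := sumR (fun wr => is_hard (fst wr)) Pi.

Definition hard_violations (Pi : program) (J : interp) : R :=
  sumR (fun wr => if satb J (snd wr) then 0 else is_hard (fst wr)) Pi.

Definition rule_soft_weight (J : interp) (wr : weight * rule) : R :=
  if satb J (snd wr) then soft_val (fst wr) else 0.

Definition soft_weight (Pi : program) (J : interp) : R := sumR (rule_soft_weight J) Pi.

Definition soft_factor (sg : list atom) (Pi : program) (J : interp) : R :=
  if stableb sg (unweight (sat_part Pi J)) J then exp (soft_weight Pi J) else 0.

Definition limit_weight (sg : list atom) (Pi : program) (J : interp) : R :=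
  soft_factor sg Pi J * zero_ind (hard_violations Pi J).

Definition satisfies_hard (Pi : program) (J : interp) : Prop :=
  forall wr, In wr Pi -> fst wr = WAlpha -> satb J (snd wr) = true.

Lemma Wt_factor sg Pi alpha J :
  Wt sg Pi alpha J =
  exp (alpha * hard_count Pi) * (soft_factor sg Pi J * exp (- (alpha * hard_violations Pi J))).
Proof.
  unfold Wt, soft_factor. destruct (stableb _ _ _); [|ring].
  assert (E : sumR (fun wr => wval alpha (fst wr)) (sat_part Pi J) =
              alpha * hard_count Pi + soft_weight Pi J + - (alpha * hard_violations Pi J)).
  { unfold sat_part, hard_count, soft_weight, hard_violations. rewrite sumR_filter.
    rewrite (sumR_ext_in _ (fun wr => alpha * is_hard (fst wr) + rule_soft_weight J wr +
                                   - alpha * (if satb J (snd wr) then 0 else is_hard (fst wr)))).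
    - rewrite !sumR_plus, !sumR_scal. ring.
    - intros [w r] _. unfold rule_soft_weight. cbn. destruct (satb J r), w; cbn; ring. }
  rewrite E, !exp_plus. ring.
Qed.

Lemma hard_violations_ge0 Pi J : 0 <= hard_violations Pi J.
Proof.
  apply sumR_ge0. intros [[w|] r] _; cbn; destruct (satb J r); lra.
Qed.

Lemma hard_violations_eq0 Pi J : hard_violations Pi J = 0 <-> satisfies_hard Pi J.
Proof.
  unfold hard_violations.
  rewrite sumR_eq0_iff by (intros [[w|] r] _; cbn; destruct (satb J r); lra).
  split.
  - intros H wr Hwr Hw. specialize (H wr Hwr). rewrite Hw in H. cbn in H.
    destruct (satb J (snd wr)); [reflexivity|lra].
  - intros H [w r] Hwr. cbn. destruct (satb J r) eqn:Hs; [reflexivity|].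
    destruct w; [reflexivity|]. specialize (H _ Hwr eq_refl). cbn in H. congruence.
Qed.

Lemma lpmln_prob_of_is_lim sg Pi J (p : R) :
  is_lim (fun alpha => Wt sg Pi alpha J / sumR (Wt sg Pi alpha) (interps sg)) p_infty p ->
  lpmln_prob sg Pi J p.
Proof.
  intros H eps Heps. apply is_lim_spec in H. destruct (H (mkposreal eps Heps)) as [M HM].
  exists M. intros alpha Halpha. apply HM. lra.
Qed.

Theorem lpmln_prob_limit sg Pi J :
  sumR (limit_weight sg Pi) (interps sg) <> 0 ->
  lpmln_prob sg Pi J (limit_weight sg Pi J / sumR (limit_weight sg Pi) (interps sg)).
Proof.
  intros HS. apply lpmln_prob_of_is_lim.
  eapply is_lim_ext;
    [|apply (is_lim_normalized (interps sg) (soft_factor sg Pi) (hard_violations Pi));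
      [intros; apply hard_violations_ge0|apply hard_violations_ge0|exact HS]].
  intros alpha. cbn.
  rewrite Wt_factor, (sumR_ext_in _ _ _ (fun K _ => Wt_factor sg Pi alpha K)), sumR_scal.
  symmetry. apply Rdiv_mult_l_l, Rgt_not_eq, exp_pos.
Qed.

Fixpoint interps_from (base : interp) (sg : list atom) : list interp :=
  match sg with
  | [] => [base]
  | a :: l => flat_map (fun f => [upd f a false; upd f a true]) (interps_from base l)
  end.

Lemma interps_from_false sg : interps sg = interps_from (fun _ => false) sg.
Proof. induction sg as [|a sg IH]; cbn; [reflexivity|]. now rewrite IH. Qed.

Section Update.

Implicit Types (f : interp) (a x : atom) (b c : bool).

Lemma upd_eq f a b : upd f a b a = b.
Proof. unfold upd, atom_eqb. now destruct (atom_eq_dec a a). Qed.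

Lemma upd_neq f a b x : x <> a -> upd f a b x = f x.
Proof. intros H. unfold upd, atom_eqb. now destruct (atom_eq_dec x a). Qed.

Lemma upd_comm f a x b c : a <> x -> upd (upd f a b) x c = upd (upd f x c) a b.
Proof.
  intros H. apply functional_extensionality. intros z. unfold upd, atom_eqb.
  destruct (atom_eq_dec z x), (atom_eq_dec z a); congruence.
Qed.

Lemma upd_upd f a b c : upd (upd f a b) a c = upd f a c.
Proof.
  apply functional_extensionality. intros z. unfold upd, atom_eqb.
  now destruct (atom_eq_dec z a).
Qed.

Lemma upd_id f a : upd f a (f a) = f.
Proof.
  apply functional_extensionality. intros z. unfold upd, atom_eqb.
  destruct (atom_eq_dec z a); congruence.
Qed.

Lemma upd_false_true f a x : upd f a false x = true -> f x = true.
Proof. unfold upd, atom_eqb. destruct (atom_eq_dec x a); [discriminate|auto]. Qed.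

End Update.

Lemma in_interps_from l f g : In g (interps_from f l) <-> forall a, ~ In a l -> g a = f a.
Proof.
  revert f g. induction l as [|c l IH]; intros f g; cbn.
  - split.
    + intros [<-|[]] a _. reflexivity.
    + intros H. left. apply functional_extensionality. intros a. symmetry. now apply H.
  - rewrite in_flat_map. split.
    + intros [h [Hh Hg]] a Ha. rewrite IH in Hh.
      destruct Hg as [<-|[<-|[]]]; rewrite upd_neq by (intros ->; apply Ha; now left);
        apply Hh; intros Hal; apply Ha; now right.
    + intros H. exists (upd g c (f c)). split.
      * apply IH. intros a Ha. destruct (atom_eq_dec a c) as [->|Hac].
        -- apply upd_eq.
        -- rewrite upd_neq by assumption. apply H. intros [->|Hal]; contradiction.
      * cbn. rewrite !upd_upd. destruct (g c) eqn:Hgc; [right; left|left];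
          rewrite <- Hgc; apply upd_id.
Qed.

Lemma in_interps sg J : In J (interps sg) -> forall a, ~ In a sg -> J a = false.
Proof. rewrite interps_from_false, in_interps_from. auto. Qed.

Lemma in_interps_true sg J a : In J (interps sg) -> J a = true -> In a sg.
Proof.
  intros HJ Ha. destruct (in_dec atom_eq_dec a sg) as [|Hn]; [assumption|].
  now rewrite (in_interps sg J HJ a Hn) in Ha.
Qed.

Lemma sumR_interps_from_cons (G : interp -> R) base a l :
  sumR G (interps_from base (a :: l)) =
  sumR (fun h => G (upd h a false) + G (upd h a true)) (interps_from base l).
Proof.
  cbn [interps_from]. rewrite sumR_flat_map. apply sumR_ext_in. intros h _. cbn. ring.
Qed.

Lemma sumR_interps_from_app l1 (G : interp -> R) base l2 :
  sumR G (interps_from base (l1 ++ l2)) =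
  sumR (fun f => sumR G (interps_from f l1)) (interps_from base l2).
Proof.
  revert G base l2. induction l1 as [|a l1 IH]; intros G base l2.
  - apply sumR_ext_in. intros f _. cbn. ring.
  - rewrite <- app_comm_cons, sumR_interps_from_cons, IH. apply sumR_ext_in. intros f _.
    now rewrite sumR_interps_from_cons.
Qed.

Lemma sumR_interps_from_perm l l' (G : interp -> R) base :
  Permutation l l' -> NoDup l -> sumR G (interps_from base l) = sumR G (interps_from base l').
Proof.
  intros P. revert G base. induction P as [|x l l' P IH|x y l|l l' l'' P1 IH1 P2 IH2];
    intros G base ND.
  - reflexivity.
  - inversion ND; subst. rewrite !sumR_interps_from_cons. now apply IH.
  - inversion ND as [|? ? Hy ND']; subst. inversion ND' as [|? ? Hx _]; subst.
    assert (Hxy : y <> x) by (intros ->; apply Hy; now left).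
    rewrite !sumR_interps_from_cons. apply sumR_ext_in. intros h _.
    rewrite !(upd_comm h y x) by assumption. ring.
  - rewrite IH1 by assumption. apply IH2. eapply Permutation_NoDup; eassumption.
Qed.

Lemma sumR_prod_interps_from (F : atom -> bool -> R) l base : NoDup l ->
  sumR (fun J => prodR (fun a => F a (J a)) l) (interps_from base l) =
  prodR (fun a => F a false + F a true) l.
Proof.
  intros ND. revert base. induction ND as [|a l Ha ND IH]; intros base.
  - cbn. ring.
  - rewrite sumR_interps_from_cons, prodR_cons, <- IH with (base := base), <- sumR_scal.
    apply sumR_ext_in. intros h _. rewrite !prodR_cons, !upd_eq.
    rewrite !(prodR_ext_in (fun x => F x (upd h a _ x)) (fun x => F x (h x))); [ring| |];
      intros x Hx; rewrite upd_neq; congruence.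
Qed.

Lemma existsb_negb_forallb {A} (f : A -> bool) l :
  existsb f l = negb (forallb (fun x => negb (f x)) l).
Proof. induction l as [|x l IH]; cbn; [reflexivity|]. rewrite IH. now destruct (f x). Qed.

Lemma forallb_false_exists {A} (f : A -> bool) l :
  forallb f l = false -> exists x, In x l /\ f x = false.
Proof.
  induction l as [|x l IH]; cbn; [discriminate|].
  destruct (f x) eqn:Hx; cbn; [intros H; destruct (IH H) as [y [Hy Hfy]]|]; eauto.
Qed.

Lemma reduct_satb_self J r : satb J r = true -> reduct_satb J J r = true.
Proof.
  unfold satb, reduct_satb, body_holds. rewrite existsb_negb_forallb.
  destruct (forallb (fun a => negb (J a)) (rneg r)); cbn; [now rewrite andb_true_r|reflexivity].
Qed.

Lemma reduct_satb_antimono I J K r :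
  reduct_satb I J r = true -> (forall a, K a = true -> J a = true) ->
  head_holds K r = head_holds J r -> reduct_satb I K r = true.
Proof.
  unfold reduct_satb. destruct (existsb _ _); [reflexivity|]. intros HJ HKJ Hhead.
  destruct (forallb (fun a => K a) (rpos r)) eqn:HK; [|reflexivity].
  assert (Hpos : forallb (fun a => J a) (rpos r) = true).
  { rewrite forallb_forall in *. intros a Ha. apply HKJ, HK, Ha. }
  rewrite Hpos in HJ. cbn in *. congruence.
Qed.

Lemma stableb_sat_part_iff sg Pi J :
  stableb sg (unweight (sat_part Pi J)) J = true <->
  (forall K, In K (interps sg) -> (forall a, In a sg -> K a = true -> J a = true) ->
     (forall wr, In wr Pi -> satb J (snd wr) = true -> reduct_satb J K (snd wr) = true) ->
     forall a, In a sg -> K a = J a).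
Proof.
  assert (Hin : forall r, In r (unweight (sat_part Pi J)) <->
                  exists wr, In wr Pi /\ satb J (snd wr) = true /\ r = snd wr).
  { intros r. unfold unweight, sat_part. rewrite in_map_iff. setoid_rewrite filter_In.
    split; [intros [wr [<- Hwr]]|intros [wr [Hwr [Hs ->]]]]; exists wr; tauto. }
  assert (Hmodel : forallb (satb J) (unweight (sat_part Pi J)) = true).
  { apply forallb_forall. intros r Hr. apply Hin in Hr as [wr [_ [Hs ->]]]. exact Hs. }
  unfold stableb, subb, eqb_on. rewrite Hmodel, andb_true_l, forallb_forall.
  split.
  - intros H K HK Hsub Hred a Ha. specialize (H K HK). cbv beta in H.
    rewrite implb_true_iff, andb_true_iff, !forallb_forall in H.
    apply eqb_prop. apply H; [split|exact Ha].
    + intros x Hx. specialize (Hsub x Hx). destruct (K x); cbn; auto.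
    + intros r Hr. apply Hin in Hr as [wr [Hwr [Hs ->]]]. auto.
  - intros H K HK. rewrite implb_true_iff, andb_true_iff, !forallb_forall. intros [Hsub Hred] a Ha.
    rewrite (H K HK); [apply eqb_reflx| | |exact Ha].
    + intros x Hx HKx. specialize (Hsub x Hx). now rewrite HKx in Hsub.
    + intros wr Hwr Hs. apply Hred, Hin. eauto.
Qed.

Lemma reduct_satb_upd_false J a r :
  reduct_satb J J r = true -> (rhead r = Some a -> body_holds J r = false) ->
  reduct_satb J (upd J a false) r = true.
Proof.
  intros Hsat Hns.
  destruct (rhead r) as [h|] eqn:Hh; [destruct (atom_eq_dec h a) as [->|Hha]|].
  - specialize (Hns eq_refl). unfold body_holds in Hns. unfold reduct_satb.
    rewrite existsb_negb_forallb.
    destruct (forallb (fun x => negb (J x)) (rneg r)) eqn:Hneg; [cbn|reflexivity].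
    destruct (forallb (fun x => upd J a false x) (rpos r)) eqn:Hpos; [exfalso|reflexivity].
    enough (forallb (fun x => J x) (rpos r) = true) by (rewrite andb_true_r in Hns; congruence).
    rewrite forallb_forall in *. intros x Hx. apply upd_false_true with a, Hpos, Hx.
  - apply reduct_satb_antimono with J; [exact Hsat|apply upd_false_true|].
    unfold head_holds. rewrite Hh. now apply upd_neq.
  - apply reduct_satb_antimono with J; [exact Hsat|apply upd_false_true|].
    unfold head_holds. now rewrite Hh.
Qed.

(* Removing an unsupported true atom would leave a smaller model of the reduct. *)
Lemma stable_supported sg Pi J a :
  In J (interps sg) -> stableb sg (unweight (sat_part Pi J)) J = true -> J a = true ->
  exists wr, In wr Pi /\ rhead (snd wr) = Some a /\ body_holds J (snd wr) = true.
Proof.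
  intros HJ Hst Ha. pose proof (in_interps_true sg J a HJ Ha) as Hsg.
  set (supports := fun wr : weight * rule =>
         match rhead (snd wr) with Some h => atom_eqb h a | None => false end
         && body_holds J (snd wr)).
  destruct (existsb supports Pi) eqn:Hex.
  - apply existsb_exists in Hex as [[w r] [Hwr Hs]]. exists (w, r). unfold supports in Hs. cbn in *.
    destruct (rhead r) as [h|]; [|discriminate]. apply andb_true_iff in Hs as [Hh Hb].
    unfold atom_eqb in Hh. destruct (atom_eq_dec h a) as [->|]; [auto|discriminate].
  - exfalso.
    enough (HK : upd J a false a = J a) by (rewrite upd_eq in HK; congruence).
    apply (proj1 (stableb_sat_part_iff sg Pi J) Hst);
      [| |intros [w r] Hwr Hsat|exact Hsg].
    + rewrite interps_from_false, in_interps_from. intros x Hx.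
      rewrite upd_neq by (intros ->; contradiction). now apply (in_interps sg J HJ).
    + intros x _. apply upd_false_true.
    + apply reduct_satb_upd_false; [now apply reduct_satb_self|]. cbn. intros Hh.
      destruct (body_holds J r) eqn:Hb; [exfalso|reflexivity].
      assert (Hsupp : supports (w, r) = true).
      { unfold supports. cbn. rewrite Hh, Hb. unfold atom_eqb.
        now destruct (atom_eq_dec a a). }
      assert (existsb supports Pi = true) by (apply existsb_exists; eauto). congruence.
Qed.

(* Fages' theorem for tight programs. *)
Lemma stable_of_level_supported sg Pi J (level : atom -> nat) :
  (forall a, J a = true -> exists wr, In wr Pi /\ rhead (snd wr) = Some a /\
     body_holds J (snd wr) = true /\ forall b, In b (rpos (snd wr)) -> (level b < level a)%nat) ->
  stableb sg (unweight (sat_part Pi J)) J = true.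
Proof.
  intros Hsupp. apply stableb_sat_part_iff. intros K _ Hsub Hred.
  assert (Hup : forall a, J a = true -> K a = true).
  { intros a. induction a as [a IH] using (well_founded_induction (well_founded_ltof atom level)).
    intros Ha. destruct (Hsupp a Ha) as [[w r] [Hwr [Hh [Hb Hlvl]]]]. cbn in *.
    assert (Hsat : satb J r = true) by (unfold satb, head_holds; now rewrite Hb, Hh).
    specialize (Hred _ Hwr Hsat). cbn in Hred.
    unfold body_holds in Hb. apply andb_true_iff in Hb as [Hpos Hneg].
    unfold reduct_satb, head_holds in Hred.
    rewrite existsb_negb_forallb, Hneg, Hh in Hred. cbn in Hred.
    replace (forallb (fun x => K x) (rpos r)) with true in Hred; [exact Hred|].
    symmetry. rewrite forallb_forall in *. intros b Hbin. apply IH; [apply Hlvl|apply Hpos]; auto. }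
  intros a Ha. destruct (J a) eqn:HJa; [now apply Hup|].
  destruct (K a) eqn:HKa; [|reflexivity]. specialize (Hsub a Ha HKa). congruence.
Qed.

Lemma NoDup_flat_map {A C} (f : A -> list C) l :
  NoDup l -> (forall x, In x l -> NoDup (f x)) ->
  (forall x y c, In x l -> In y l -> In c (f x) -> In c (f y) -> x = y) ->
  NoDup (flat_map f l).
Proof.
  induction 1 as [|a l Ha ND IH]; intros Hf Hdisj; cbn; [constructor|].
  apply NoDup_app; [apply Hf; now left| |].
  - apply IH; [intros x Hx; apply Hf; now right|].
    intros x y c Hx Hy. apply Hdisj; now right.
  - intros c Hca Hcl. apply in_flat_map in Hcl as [y [Hy Hcy]].
    assert (a = y) as -> by (apply (Hdisj a y c); auto; [now left|now right]). contradiction.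
Qed.

Lemma in_all_assign k s : In s (all_assign k) <-> length s = k.
Proof.
  revert s. induction k as [|k IH]; intros s; cbn.
  - split; [now intros [<-|[]]|]. destruct s; [now left|discriminate].
  - rewrite in_flat_map. split.
    + intros [x [Hx Hs]]. apply IH in Hx. destruct Hs as [<-|[<-|[]]]; cbn; congruence.
    + destruct s as [|b s]; [discriminate|]. intros [= Hs]. exists s.
      split; [now apply IH|]. destruct b; cbn; auto.
Qed.

Lemma NoDup_all_assign k : NoDup (all_assign k).
Proof.
  induction k as [|k IH]; cbn; [repeat constructor; auto|].
  apply NoDup_flat_map; [exact IH| |].
  - intros s _. constructor; [intros [[=]|[]]|repeat constructor; auto].
  - intros x y c _ _ Hx Hy. destruct Hx as [<-|[<-|[]]]; destruct Hy as [[=]|[[=]|[]]]; auto.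
Qed.

Definition node (B : BN) (v : nat) : list atom :=
  AVar v :: map (APF v) (all_assign (length (bn_par B v))).

Lemma bn_sig_node B : bn_sig B = flat_map (node B) (seq 0 (bn_n B)).
Proof. reflexivity. Qed.

Lemma in_node B v a :
  In a (node B v) <-> a = AVar v \/ exists s, length s = length (bn_par B v) /\ a = APF v s.
Proof.
  unfold node. cbn. rewrite in_map_iff. setoid_rewrite in_all_assign. firstorder congruence.
Qed.

Lemma NoDup_node B v : NoDup (node B v).
Proof.
  constructor.
  - rewrite in_map_iff. intros [s [[=] _]].
  - apply NoDup_map_NoDup_ForallPairs; [intros s t _ _ [= ->]; reflexivity|apply NoDup_all_assign].
Qed.

Lemma NoDup_bn_sig B : NoDup (bn_sig B).
Proof.
  apply NoDup_flat_map; [apply seq_NoDup|intros; apply NoDup_node|].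
  intros v w a _ _ Hv Hw. apply in_node in Hv, Hw.
  destruct Hv as [->|[s [_ ->]]], Hw as [[=]|[t [_ [=]]]]; auto.
Qed.

Lemma in_bn_sig B a :
  In a (bn_sig B) <->
  (exists v, (v < bn_n B)%nat /\ a = AVar v) \/
  (exists v s, (v < bn_n B)%nat /\ length s = length (bn_par B v) /\ a = APF v s).
Proof.
  rewrite bn_sig_node, in_flat_map. setoid_rewrite in_node. setoid_rewrite in_seq.
  firstorder (subst; eauto with arith).
Qed.

Lemma in_translate B wr :
  In wr (translate B) <->
  exists v s, (v < bn_n B)%nat /\ length s = length (bn_par B v) /\
    (In wr (pf_rules v s (bn_cpt B v s)) \/ wr = (WAlpha, bn_rule B v s)).
Proof.
  unfold translate. rewrite in_flat_map. setoid_rewrite in_flat_map.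
  setoid_rewrite in_seq. setoid_rewrite in_all_assign. setoid_rewrite in_app_iff.
  cbn. firstorder (subst; eauto with arith).
Qed.

Definition parent_values (B : BN) (J : interp) (v : nat) : list bool :=
  map (fun u => J (AVar u)) (bn_par B v).

Lemma literals_hold J l s : length s = length l ->
  forallb (fun a => J a) (map (fun us => AVar (fst us)) (filter snd (combine l s))) &&
  forallb (fun a => negb (J a))
    (map (fun us => AVar (fst us)) (filter (fun us => negb (snd us)) (combine l s))) = true
  <-> s = map (fun u => J (AVar u)) l.
Proof.
  revert s. induction l as [|u l IH]; intros [|b s] Hlen; try discriminate; cbn; [tauto|].
  injection Hlen as Hlen. specialize (IH s Hlen).
  destruct b; cbn; destruct (J (AVar u)); cbn; rewrite ?andb_false_r, ?IH;
    split; intros H; congruence.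
Qed.

Lemma body_holds_bn_rule B J v s : length s = length (bn_par B v) ->
  body_holds J (bn_rule B v s) = true <-> s = parent_values B J v /\ J (APF v s) = true.
Proof.
  intros Hs. unfold body_holds, bn_rule, parent_values. cbn [rpos rneg].
  rewrite forallb_app, <- (literals_hold J _ s Hs). cbn [forallb]. rewrite andb_true_r.
  set (P := forallb (fun a => J a) (map _ (filter snd _))).
  set (N := forallb (fun a => negb (J a)) _).
  rewrite !andb_true_iff. tauto.
Qed.

Lemma in_rpos_bn_rule B v s b :
  In b (rpos (bn_rule B v s)) -> b = APF v s \/ exists u, In u (bn_par B v) /\ b = AVar u.
Proof.
  cbn. rewrite in_app_iff, in_map_iff. intros [[[u c] [<- Hin]]|[<-|[]]]; [right|now left].
  apply filter_In in Hin as [Hin _]. exists u. split; [|reflexivity]. eapply in_combine_l, Hin.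
Qed.

Lemma bn_rule_in_translate B v s : (v < bn_n B)%nat -> length s = length (bn_par B v) ->
  In (WAlpha, bn_rule B v s) (translate B).
Proof. intros Hv Hs. apply in_translate. exists v, s. auto. Qed.

Lemma translate_head_AVar B wr v : In wr (translate B) -> rhead (snd wr) = Some (AVar v) ->
  exists s, length s = length (bn_par B v) /\ snd wr = bn_rule B v s.
Proof.
  intros Hwr Hh. apply in_translate in Hwr as [w [s [_ [Hs [Hpf| ->]]]]].
  - unfold pf_rules in Hpf.
    destruct (Rlt_dec 0 _); [destruct (Rlt_dec _ 1)|]; destruct Hpf as [<-|[]]; discriminate.
  - injection Hh as ->. eauto.
Qed.

Lemma bn_cpt_range B v s : bn_wf B -> (v < bn_n B)%nat -> length s = length (bn_par B v) ->
  0 <= bn_cpt B v s <= 1.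
Proof. intros HB Hv. now apply HB. Qed.

Lemma pf_rules_cases v s p : 0 <= p <= 1 ->
  (p = 0 /\ pf_rules v s p = [(WAlpha, mkRule None [APF v s] [])]) \/
  (0 < p < 1 /\ pf_rules v s p = [(WReal (ln (p / (1 - p))), mkRule (Some (APF v s)) [] [])]) \/
  (p = 1 /\ pf_rules v s p = [(WAlpha, mkRule (Some (APF v s)) [] [])]).
Proof.
  intros Hp. unfold pf_rules.
  destruct (Rlt_dec 0 p); [destruct (Rlt_dec p 1)|]; [right; left|right; right|left];
    (split; [lra|reflexivity]).
Qed.

Lemma pf_fact_in_translate B v s : bn_wf B -> (v < bn_n B)%nat ->
  length s = length (bn_par B v) -> 0 < bn_cpt B v s ->
  exists w, In (w, mkRule (Some (APF v s)) [] []) (translate B).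
Proof.
  intros HB Hv Hs Hp.
  destruct (pf_rules_cases v s _ (bn_cpt_range B v s HB Hv Hs)) as [[Hc E]|[[_ E]|[_ E]]];
    [lra| |]; eexists; apply in_translate; exists v, s; (split; [|split]); auto;
    left; rewrite E; now left.
Qed.

Definition follows_pf (B : BN) (J : interp) : Prop :=
  forall v, (v < bn_n B)%nat -> J (AVar v) = J (APF v (parent_values B J v)).

Definition pf_forced (B : BN) (J : interp) : Prop :=
  forall v s, (v < bn_n B)%nat -> length s = length (bn_par B v) ->
    (bn_cpt B v s = 0 -> J (APF v s) = false) /\ (bn_cpt B v s = 1 -> J (APF v s) = true).

Lemma satisfies_hard_translate B J : bn_wf B -> follows_pf B J -> pf_forced B J ->
  satisfies_hard (translate B) J.
Proof.
  intros HB Hf Hp wr Hwr Hw. apply in_translate in Hwr as [v [s [Hv [Hs [Hpf| ->]]]]].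
  - destruct (Hp v s Hv Hs) as [H0 H1].
    destruct (pf_rules_cases v s _ (bn_cpt_range B v s HB Hv Hs)) as [[Hc E]|[[_ E]|[Hc E]]];
      rewrite E in Hpf; destruct Hpf as [<-|[]]; [|discriminate|];
      unfold satb, body_holds, head_holds; cbn; [rewrite H0|rewrite H1]; auto.
  - unfold satb. cbn [snd]. destruct (body_holds J (bn_rule B v s)) eqn:Hb; [|reflexivity].
    apply body_holds_bn_rule in Hb as [-> Hpf]; [|exact Hs].
    unfold head_holds. cbn. now rewrite (Hf v Hv).
Qed.

Lemma pf_forced_of_satisfies_hard B J : bn_wf B -> satisfies_hard (translate B) J ->
  pf_forced B J.
Proof.
  intros HB Hh v s Hv Hs.
  assert (Hin : forall wr, In wr (pf_rules v s (bn_cpt B v s)) -> In wr (translate B))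
    by (intros wr Hwr; apply in_translate; exists v, s; auto).
  destruct (pf_rules_cases v s _ (bn_cpt_range B v s HB Hv Hs)) as [[Hc E]|[[Hc _]|[Hc E]]];
    rewrite ?E in Hin; (split; intros; [|]); try lra;
    specialize (Hh _ (Hin _ (or_introl eq_refl)) eq_refl);
    unfold satb, body_holds, head_holds in Hh; cbn in Hh;
    destruct (J (APF v s)); auto.
Qed.

Lemma follows_pf_of_stable B J : In J (interps (bn_sig B)) -> satisfies_hard (translate B) J ->
  stableb (bn_sig B) (unweight (sat_part (translate B) J)) J = true -> follows_pf B J.
Proof.
  intros HJ Hh Hst v Hv. set (s := parent_values B J v).
  assert (Hs : length s = length (bn_par B v)) by apply length_map.
  destruct (J (APF v s)) eqn:Hpf.
  - specialize (Hh _ (bn_rule_in_translate B v s Hv Hs) eq_refl). unfold satb in Hh. cbn in Hh.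
    now rewrite (proj2 (body_holds_bn_rule B J v s Hs) (conj eq_refl Hpf)) in Hh.
  - destruct (J (AVar v)) eqn:Hvar; [exfalso|reflexivity].
    destruct (stable_supported _ _ _ _ HJ Hst Hvar) as [wr [Hwr [Hhead Hbody]]].
    destruct (translate_head_AVar B wr v Hwr Hhead) as [t [Ht Hr]]. rewrite Hr in Hbody.
    apply body_holds_bn_rule in Hbody as [-> Hpf']; [|exact Ht]. fold s in Hpf'. congruence.
Qed.

(* Acyclicity of the network makes the program tight: levels [AVar v |-> v + 1], [PF |-> 0]. *)
Lemma stable_translate B J : bn_wf B -> In J (interps (bn_sig B)) ->
  follows_pf B J -> pf_forced B J ->
  stableb (bn_sig B) (unweight (sat_part (translate B) J)) J = true.
Proof.
  intros HB HJ Hf Hp.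
  apply stable_of_level_supported with
    (level := fun a => match a with AVar v => S v | APF _ _ => 0%nat end).
  intros a Ha. pose proof (in_interps_true _ _ _ HJ Ha) as Hsig.
  apply in_bn_sig in Hsig as [[v [Hv ->]]|[v [s [Hv [Hs ->]]]]].
  - set (s := parent_values B J v).
    assert (Hs : length s = length (bn_par B v)) by apply length_map.
    exists (WAlpha, bn_rule B v s). cbn.
    split; [now apply bn_rule_in_translate|]. split; [reflexivity|]. split.
    + apply body_holds_bn_rule; [exact Hs|]. split; [reflexivity|].
      unfold s. now rewrite <- (Hf v Hv).
    + intros b Hb. apply in_rpos_bn_rule in Hb as [->|[u [Hu ->]]]; [lia|].
      destruct (HB v Hv) as [_ [Hlt _]]. specialize (Hlt u Hu). lia.
  - assert (Hpos : 0 < bn_cpt B v s).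
    { destruct (bn_cpt_range B v s HB Hv Hs) as [[Hlt|Heq] _]; [exact Hlt|].
      now rewrite (proj1 (Hp v s Hv Hs)) in Ha. }
    destruct (pf_fact_in_translate B v s HB Hv Hs Hpos) as [w Hw].
    exists (w, mkRule (Some (APF v s)) [] []). cbn. repeat split; [exact Hw|]. intros b [].
Qed.

Lemma hard_stable_iff B J : bn_wf B -> In J (interps (bn_sig B)) ->
  satisfies_hard (translate B) J /\
  stableb (bn_sig B) (unweight (sat_part (translate B) J)) J = true <->
  follows_pf B J /\ pf_forced B J.
Proof.
  intros HB HJ. split.
  - intros [Hh Hst]. split; [now apply follows_pf_of_stable|now apply pf_forced_of_satisfies_hard].
  - intros [Hf Hp]. split; [now apply satisfies_hard_translate|now apply stable_translate].
Qed.

Definition coin (p : R) (b : bool) : R := if b then p else 1 - p.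

Lemma coin_sum p : coin p false + coin p true = 1.
Proof. cbn. ring. Qed.

Definition node_prob (B : BN) (J : interp) (v : nat) : R :=
  b2R (Bool.eqb (J (AVar v)) (J (APF v (parent_values B J v)))) *
  prodR (fun s => coin (bn_cpt B v s) (J (APF v s))) (all_assign (length (bn_par B v))).

(* The distribution in which every PF(V,S) is an independent coin of bias P(V=t|S)
   and V copies the PF atom selected by its parents. *)
Definition expanded_prob (B : BN) (J : interp) : R := prodR (node_prob B J) (seq 0 (bn_n B)).

(* For 0 < p < 1 the soft fact of weight ln (p / (1 - p)) contributes [coin p b / (1 - p)]. *)
Definition entry_norm (p : R) : R :=
  if Rlt_dec 0 p then if Rlt_dec p 1 then / (1 - p) else 1 else 1.

Definition soft_norm (B : BN) : R :=
  prodR (fun v => prodR (fun s => entry_norm (bn_cpt B v s)) (all_assign (length (bn_par B v))))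
    (seq 0 (bn_n B)).

Lemma soft_norm_pos B : 0 < soft_norm B.
Proof.
  apply prodR_pos. intros v _. apply prodR_pos. intros s _. unfold entry_norm.
  destruct (Rlt_dec 0 _); [destruct (Rlt_dec _ 1)|]; [apply Rinv_0_lt_compat|..]; lra.
Qed.

Lemma soft_weight_single wr J : soft_weight [wr] J = rule_soft_weight J wr.
Proof. unfold soft_weight, sumR. cbn. ring. Qed.

Lemma rule_soft_weight_hard J r : rule_soft_weight J (WAlpha, r) = 0.
Proof. unfold rule_soft_weight. cbn. destruct (satb J r); reflexivity. Qed.

Lemma exp_soft_weight_pf_rules v s p J : 0 <= p <= 1 ->
  (p = 0 -> J (APF v s) = false) -> (p = 1 -> J (APF v s) = true) ->
  exp (soft_weight (pf_rules v s p) J) = entry_norm p * coin p (J (APF v s)).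
Proof.
  intros Hp H0 H1. unfold entry_norm.
  destruct (pf_rules_cases v s p Hp) as [[-> E]|[[Hc E]|[-> E]]];
    rewrite E, soft_weight_single, ?rule_soft_weight_hard, ?exp_0.
  - rewrite H0 by reflexivity. destruct (Rlt_dec 0 0); cbn; lra.
  - unfold rule_soft_weight, satb, body_holds, head_holds. cbn.
    destruct (Rlt_dec 0 p), (Rlt_dec p 1); try lra. destruct (J (APF v s)); cbn.
    + rewrite exp_ln by (apply Rdiv_lt_0_compat; lra). field. lra.
    + rewrite exp_0. field. lra.
  - rewrite H1 by reflexivity. destruct (Rlt_dec 0 1), (Rlt_dec 1 1); cbn; lra.
Qed.

Lemma exp_soft_weight_translate B J : bn_wf B -> follows_pf B J -> pf_forced B J ->
  exp (soft_weight (translate B) J) = soft_norm B * expanded_prob B J.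
Proof.
  intros HB Hf Hp. unfold soft_weight, translate, soft_norm, expanded_prob.
  rewrite sumR_flat_map, exp_sumR, <- prodR_mult. apply prodR_ext_in. intros v Hv.
  apply in_seq in Hv as [_ Hv]. cbn in Hv.
  rewrite sumR_flat_map, exp_sumR. unfold node_prob.
  rewrite (Hf v Hv), eqb_reflx, Rmult_1_l, <- prodR_mult. apply prodR_ext_in. intros s Hs.
  apply in_all_assign in Hs. destruct (Hp v s Hv Hs) as [H0 H1].
  rewrite sumR_app, exp_plus.
  fold (soft_weight (pf_rules v s (bn_cpt B v s)) J) (soft_weight [(WAlpha, bn_rule B v s)] J).
  rewrite soft_weight_single, rule_soft_weight_hard, exp_0, Rmult_1_r.
  apply exp_soft_weight_pf_rules; auto. now apply bn_cpt_range.
Qed.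

Lemma coin_neq0 p b : coin p b <> 0 -> (p = 0 -> b = false) /\ (p = 1 -> b = true).
Proof. destruct b; intros H; split; intros ->; try reflexivity; exfalso; apply H; cbn; ring. Qed.

Lemma expanded_prob_neq0 B J : expanded_prob B J <> 0 -> follows_pf B J /\ pf_forced B J.
Proof.
  intros H.
  assert (Hnode : forall v, (v < bn_n B)%nat -> node_prob B J v <> 0).
  { intros v Hv Hz. apply H, (prodR_eq0 _ _ v); [apply in_seq; lia|exact Hz]. }
  split.
  - intros v Hv. specialize (Hnode v Hv). unfold node_prob in Hnode.
    destruct (Bool.eqb _ _) eqn:E; [now apply eqb_prop|]. exfalso. apply Hnode. cbn. ring.
  - intros v s Hv Hs. apply coin_neq0. intros Hz. apply (Hnode v Hv). unfold node_prob.
    rewrite (prodR_eq0 _ _ s); [ring|apply in_all_assign, Hs|exact Hz].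
Qed.

Lemma limit_weight_translate B J : bn_wf B -> In J (interps (bn_sig B)) ->
  limit_weight (bn_sig B) (translate B) J = soft_norm B * expanded_prob B J.
Proof.
  intros HB HJ. unfold limit_weight, soft_factor, zero_ind.
  destruct (stableb _ _ _) eqn:Hst, (Req_EM_T (hard_violations (translate B) J) 0) as [Hv|Hv].
  1: { apply hard_violations_eq0 in Hv. rewrite Rmult_1_r.
       apply exp_soft_weight_translate; [exact HB| |]; apply (hard_stable_iff B J HB HJ); auto. }
  all: rewrite ?Rmult_0_l, ?Rmult_0_r.
  all: destruct (Req_EM_T (expanded_prob B J) 0) as [->|Hne]; [ring|exfalso].
  all: destruct (proj2 (hard_stable_iff B J HB HJ) (expanded_prob_neq0 B J Hne)) as [Hh Hs].
  all: rewrite <- hard_violations_eq0 in Hh; congruence.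
Qed.

Definition atom_node (a : atom) : nat := match a with AVar v | APF v _ => v end.

Lemma atom_node_in_node B v a : In a (node B v) -> atom_node a = v.
Proof. rewrite in_node. now intros [->|[s [_ ->]]]. Qed.

Lemma node_prob_ext B J K v : bn_wf B -> (v < bn_n B)%nat ->
  (forall a, (atom_node a <= v)%nat -> K a = J a) -> node_prob B K v = node_prob B J v.
Proof.
  intros HB Hv H. destruct (HB v Hv) as [_ [Hpar _]].
  assert (Hvals : parent_values B K v = parent_values B J v).
  { apply map_ext_in. intros u Hu. apply H. cbn. specialize (Hpar u Hu). lia. }
  unfold node_prob. rewrite Hvals, !H by (cbn; lia). f_equal.
  apply prodR_ext_in. intros s _. rewrite H by (cbn; lia). reflexivity.
Qed.

Definition pf_coin (B : BN) (a : atom) (b : bool) : R :=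
  match a with APF v s => coin (bn_cpt B v s) b | AVar _ => 1 end.

(* Summing out the atoms of node [m]: first the variable, which picks one PF atom, then the
   independent coins. *)
Lemma sumR_node_prob B base m : bn_wf B -> (m < bn_n B)%nat ->
  sumR (fun g => node_prob B g m) (interps_from base (node B m)) = 1.
Proof.
  intros HB Hm. destruct (HB m Hm) as [_ [Hpar _]].
  unfold node. rewrite sumR_interps_from_cons.
  rewrite (sumR_ext_in _ (fun h => prodR (fun a => pf_coin B a (h a))
                                      (map (APF m) (all_assign (length (bn_par B m)))))).
  - rewrite sumR_prod_interps_from, prodR_map, (prodR_ext_in _ (fun _ => 1)), prodR_const1.
    + reflexivity.
    + intros s _. apply coin_sum.
    + exact (proj2 (proj1 (NoDup_cons_iff _ _) (NoDup_node B m))).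
  - intros h _. rewrite prodR_map.
    assert (Hb : forall b, node_prob B (upd h (AVar m) b) m =
              b2R (Bool.eqb b (h (APF m (parent_values B h m)))) *
              prodR (fun s => coin (bn_cpt B m s) (h (APF m s)))
                (all_assign (length (bn_par B m)))).
    { intros b.
      assert (Hvals : parent_values B (upd h (AVar m) b) m = parent_values B h m).
      { apply map_ext_in. intros u Hu. apply upd_neq. specialize (Hpar u Hu). intros [= ->]. lia. }
      unfold node_prob. rewrite Hvals, upd_eq, upd_neq by discriminate.
      apply Rmult_eq_compat_l, prodR_ext_in. intros s _. now rewrite upd_neq by discriminate. }
    rewrite !Hb. destruct (h (APF m _)); cbn; ring.
Qed.

(* Node [m] is a leaf of the subnetwork on the nodes [0 .. m]. *)
Lemma sumR_prefix_node_prob B m base : bn_wf B -> (m <= bn_n B)%nat ->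
  sumR (fun J => prodR (node_prob B J) (seq 0 m))
    (interps_from base (flat_map (node B) (rev (seq 0 m)))) = 1.
Proof.
  intros HB. revert base. induction m as [|m IH]; intros base Hm; [cbn; ring|].
  rewrite seq_S, rev_app_distr. cbn [rev app flat_map Nat.add].
  rewrite sumR_interps_from_app, <- (IH base) by lia. apply sumR_ext_in. intros f _.
  rewrite (sumR_ext_in _ (fun g => prodR (node_prob B f) (seq 0 m) * node_prob B g m)).
  - rewrite sumR_scal, sumR_node_prob by (auto; lia). ring.
  - intros g Hg. rewrite prodR_app, prodR_cons. change (prodR (node_prob B g) []) with 1.
    rewrite Rmult_1_r. f_equal. apply prodR_ext_in. intros v Hv. apply in_seq in Hv.
    apply node_prob_ext; [exact HB|lia|]. intros a Ha.
    rewrite in_interps_from in Hg. apply Hg. intros Hin.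
    apply atom_node_in_node in Hin. lia.
Qed.

Lemma sumR_expanded_prob B : bn_wf B -> sumR (expanded_prob B) (interps (bn_sig B)) = 1.
Proof.
  intros HB. rewrite interps_from_false.
  rewrite (sumR_interps_from_perm _ (flat_map (node B) (rev (seq 0 (bn_n B))))).
  - now apply sumR_prefix_node_prob.
  - rewrite bn_sig_node. apply Permutation_flat_map, Permutation_rev.
  - apply NoDup_bn_sig.
Qed.

(* On interpretations restricting to [I], the PF atom selected by [I]'s parent values must
   equal [I v]; moving that indicator onto the PF atom makes the weight a product over atoms. *)
Definition marginal_factor (B : BN) (I : nat -> bool) (a : atom) (b : bool) : R :=
  match a with
  | AVar v => b2R (Bool.eqb b (I v))
  | APF v s => coin (bn_cpt B v s) b *
      (if list_eq_dec bool_dec s (map I (bn_par B v)) then b2R (Bool.eqb b (I v)) else 1)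
  end.

Lemma restricted_expanded_prob_prod B I J : bn_wf B ->
  b2R (restricts_to B J I) * expanded_prob B J =
  prodR (fun a => marginal_factor B I a (J a)) (bn_sig B).
Proof.
  intros HB. destruct (restricts_to B J I) eqn:Hres; unfold restricts_to in Hres.
  - rewrite forallb_forall in Hres. cbn [b2R]. rewrite Rmult_1_l.
    unfold expanded_prob. rewrite bn_sig_node, prodR_flat_map. apply prodR_ext_in. intros v Hv.
    assert (Hvar : J (AVar v) = I v) by (apply eqb_prop, Hres, Hv).
    apply in_seq in Hv as [_ Hv]. cbn in Hv. destruct (HB v Hv) as [_ [Hpar _]].
    assert (Hvals : parent_values B J v = map I (bn_par B v)).
    { apply map_ext_in. intros u Hu. apply eqb_prop, Hres, in_seq. specialize (Hpar u Hu). lia. }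
    unfold node. rewrite prodR_cons, prodR_map. cbn [marginal_factor].
    rewrite Hvar, eqb_reflx, Rmult_1_l, prodR_mult.
    rewrite (prodR_single (fun s => if list_eq_dec bool_dec s (map I (bn_par B v))
                                    then b2R (Bool.eqb (J (APF v s)) (I v)) else 1)
                          _ (map I (bn_par B v))).
    + unfold node_prob. rewrite Hvals, Hvar, Rmult_comm.
      destruct (list_eq_dec bool_dec _ _); [|contradiction].
      destruct (I v), (J (APF v (map I (bn_par B v)))); reflexivity.
    + apply NoDup_all_assign.
    + apply in_all_assign, length_map.
    + intros s _ Hs. now destruct (list_eq_dec bool_dec _ _).
  - apply forallb_false_exists in Hres as [v [Hv Hneq]]. cbn [b2R]. rewrite Rmult_0_l.
    symmetry. apply (prodR_eq0 _ _ (AVar v)).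
    + apply in_bn_sig. left. apply in_seq in Hv. exists v. split; [lia|reflexivity].
    + cbn. now rewrite Hneq.
Qed.

Lemma sumR_expanded_prob_restricts B I : bn_wf B ->
  sumR (expanded_prob B) (filter (fun J => restricts_to B J I) (interps (bn_sig B))) = bn_prob B I.
Proof.
  intros HB. rewrite sumR_filter.
  rewrite (sumR_ext_in _ (fun J => prodR (fun a => marginal_factor B I a (J a)) (bn_sig B))).
  2: { intros J _. rewrite <- restricted_expanded_prob_prod by exact HB.
       destruct (restricts_to B J I); cbn; ring. }
  rewrite interps_from_false, sumR_prod_interps_from by apply NoDup_bn_sig.
  rewrite bn_sig_node, prodR_flat_map. unfold bn_prob. apply prodR_ext_in. intros v _.
  unfold node. rewrite prodR_cons, prodR_map. cbn [marginal_factor].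
  rewrite (prodR_single _ _ (map I (bn_par B v))).
  - destruct (list_eq_dec bool_dec _ _); [|contradiction]. destruct (I v); cbn; ring.
  - apply NoDup_all_assign.
  - apply in_all_assign, length_map.
  - intros s _ Hs. destruct (list_eq_dec bool_dec _ _); [contradiction|].
    rewrite !Rmult_1_r. apply coin_sum.
Qed.

Theorem mainTheorem6 (B : BN) (HB : bn_wf B) (I : nat -> bool) :
  exists P : interp -> R,
    (forall J, In J (interps (bn_sig B)) -> lpmln_prob (bn_sig B) (translate B) J (P J)) /\
    bn_prob B I =
      sumR P (filter (fun J => restricts_to B J I) (interps (bn_sig B))).
Proof.
  assert (Hnorm : sumR (limit_weight (bn_sig B) (translate B)) (interps (bn_sig B)) = soft_norm B).
  { rewrite (sumR_ext_in _ (fun J => soft_norm B * expanded_prob B J))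
      by (intros J HJ; now apply limit_weight_translate).
    rewrite sumR_scal, sumR_expanded_prob by exact HB. ring. }
  pose proof (soft_norm_pos B) as Hpos.
  exists (expanded_prob B). split.
  - intros J HJ.
    replace (expanded_prob B J)
      with (limit_weight (bn_sig B) (translate B) J /
            sumR (limit_weight (bn_sig B) (translate B)) (interps (bn_sig B))).
    + apply lpmln_prob_limit. lra.
    + rewrite Hnorm, limit_weight_translate by assumption. field. lra.
  - symmetry. now apply sumR_expanded_prob_restricts.
Qed.
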